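(* The finite derivative test $\mathcal D$ is reasonable.
   Context: Let $\Omega=\{0,1\}$, $\Omega^\infty$ the set of infinite sequences $\omega=(\omega_1,\omega_2,\dots)$, and $\omega^t=(\omega_1,\dots,\omega_t)$ (also used for the cylinder set of all sequences with this prefix; $\omega^0=\emptyset$). $\mathcal G_t$ is the $\sigma$-algebra generated by the length-$t$ cylinders and $\mathcal G_\infty$ the $\sigma$-algebra generated by all cylinders. $\Delta(\Omega)$ is the set of probability distributions on $\Omega$; for $p\in\Delta(\Omega)$ and $x\in\Omega$, $p[x]$ is the probability of $x$. A forecasting strategy is a map $f:\bigcup_{t\ge0}(\Omega\times\Delta(\Omega)\times\Delta(\Omega))^t\to\Delta(\Omega)$; $F$ is the set of all forecasting strategies. Given an ordered pair $\vec f=(f,g)\in F\times F$ and $\omega\in\Omega^\infty$, the play path $(\omega,\vec f)$ is defined recursively: $(\omega,\vec f)^0=\emptyset$ and its $t$-th entry is $(\omega_t,f((\omega,\vec f)^{t-1}),g((\omega,\vec f)^{t-1}))$, where $(\omega,\vec f)^t$ is the prefix of length $t$. The pair $\vec f$ induces two probability measures on $(\Omega^\infty,\mathcal G_\infty)$, again denoted $f$ and $g$ (they depend on the pair), determined by $f(\omega^t)=\prod_{n=1}^t f((\omega,\vec f)^{n-1})[\omega_n]$ and $g(\omega^t)=\prod_{n=1}^t g((\omega,\vec f)^{n-1})[\omega_n]$. A (cardinal comparison) test is a sequence $T=(T_t)_{t>0}$ of $\mathcal G_t$-measurable functions $T_t:(\Omega\times\Delta(\Omega)\times\Delta(\Omega))^\infty\to[0,1]$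 (depending only on the first $t$ entries); write $T_t(\omega,\vec f)=T_t((\omega,\vec f))$ and $T(\omega,\vec f)=\lim_t T_t(\omega,\vec f)$ whenever the limit exists. For $\epsilon\in(0,1)$ let $L^{\vec f}_{T,\epsilon}=\{\omega:T(\omega,\vec f)\text{ exists and }>\epsilon\}$ and $R^{\vec f}_{T,\epsilon}=\{\omega:T(\omega,\vec f)\text{ exists and }<\epsilon\}$. $T$ is reasonable if for all $\vec f=(f,g)\in F\times F$ and every measurable $A\subseteq\Omega^\infty$: for $\epsilon\in(0,\frac12)$, if $g(A)>0$ and $f(A)<\frac{\epsilon}{1-\epsilon}g(A)$ then $g(A\cap R^{\vec f}_{T,\epsilon})>0$; and for $\epsilon\in(\frac12,1)$, if $f(A)>0$ and $g(A)<\frac{1-\epsilon}{\epsilon}f(A)$ then $f(A\cap L^{\vec f}_{T,\epsilon})>0$ (with $f,g$ the measures induced by $\vec f$). The finite derivative test $\mathcal D$ is defined for $t\ge0$ by $\mathcal D_{t+1}(\omega,\vec f)=\frac{f(\omega^t)}{f(\omega^t)+g(\omega^t)}$ if $f(\omega^t)>0$ or $g(\omega^t)>0$, and $\frac12$ otherwise. *)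

From Stdlib Require Import Reals List ClassicalEpsilon.
Import ListNotations.
Open Scope R_scope.

(* Omega = {0,1} is encoded as bool (true = 1, false = 0). *)
Definition Omega := bool.

(* An infinite sequence omega = (omega_1, omega_2, ...): omega_{n+1} = w n. *)
Definition seqOmega := nat -> Omega.

(* Delta(Omega): probability distributions on {0,1}, given by the
   probability of 1. *)
Record dist := mkDist { pone : R ; pone_range : 0 <= pone <= 1 }.

Definition pr (p : dist) (x : Omega) : R := if x then pone p else 1 - pone p.

(* An entry of a play path: (omega_t, f-forecast, g-forecast). *)
Definition entry := (Omega * dist * dist)%type.

Definition strategy := list entry -> dist.

Definition prefix (w : seqOmega) (t : nat) : list Omega := map w (seq 0 t).

Definition hist (f g : strategy) (s : list Omega) : list entry :=
  fold_left (fun h b => h ++ [(b, f h, g h)]) s [].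

Definition fweight (h : list entry) : R :=
  fold_right (fun e acc => pr (snd (fst e)) (fst (fst e)) * acc) 1 h.
Definition gweight (h : list entry) : R :=
  fold_right (fun e acc => pr (snd e) (fst (fst e)) * acc) 1 h.

Definition fcyl (f g : strategy) (s : list Omega) : R := fweight (hist f g s).
Definition gcyl (f g : strategy) (s : list Omega) : R := gweight (hist f g s).

Definition cylinder (s : list Omega) : seqOmega -> Prop :=
  fun w => prefix w (length s) = s.

Inductive measurable : (seqOmega -> Prop) -> Prop :=
  | meas_cyl : forall s, measurable (cylinder s)
  | meas_compl : forall A, measurable A -> measurable (fun w => ~ A w)
  | meas_union : forall As : nat -> seqOmega -> Prop,
      (forall k, measurable (As k)) -> measurable (fun w => exists k, As k w)
  | meas_ext : forall A B, measurable A -> (forall w, A w <-> B w) -> measurable B.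

(* The (unique) measure extending a premeasure w on cylinders, evaluated at a
   set A, given by the Caratheodory outer measure: the infimum of
   sum_k w(s_k) over countable covers of A by cylinders s_k.
   On G_infinity this coincides with the Caratheodory extension. *)
Definition cover_value (w : list Omega -> R) (A : seqOmega -> Prop) (x : R) : Prop :=
  exists s : nat -> list Omega,
    (forall v, A v -> exists k, cylinder (s k) v) /\
    infinite_sum (fun k => w (s k)) x.

Definition is_glb (E : R -> Prop) (m : R) : Prop :=
  (forall x, E x -> m <= x) /\ (forall y, (forall x, E x -> y <= x) -> y <= m).

Definition ext_measure (w : list Omega -> R) (A : seqOmega -> Prop) : R :=
  epsilon (inhabits 0) (fun m => is_glb (cover_value w A) m).

Definition fmeas (f g : strategy) (A : seqOmega -> Prop) : R := ext_measure (fcyl f g) A.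
Definition gmeas (f g : strategy) (A : seqOmega -> Prop) : R := ext_measure (gcyl f g) A.

(* A test: T t h is T_t evaluated on a play path whose first t entries are h
   (T_t depends only on the first t entries). *)
Definition test := nat -> list entry -> R.

Definition is_test (T : test) : Prop := forall t h, 0 <= T t h <= 1.

Definition Tt (T : test) (f g : strategy) (w : seqOmega) (t : nat) : R :=
  T t (hist f g (prefix w t)).

Definition Tlim (T : test) (f g : strategy) (w : seqOmega) (l : R) : Prop :=
  Un_cv (Tt T f g w) l.

Definition Lset (T : test) (f g : strategy) (eps : R) : seqOmega -> Prop :=
  fun w => exists l, Tlim T f g w l /\ l > eps.
Definition Rset (T : test) (f g : strategy) (eps : R) : seqOmega -> Prop :=
  fun w => exists l, Tlim T f g w l /\ l < eps.

Definition reasonable (T : test) : Prop :=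
  forall (f g : strategy) (A : seqOmega -> Prop), measurable A ->
    (forall eps, 0 < eps < 1/2 ->
       gmeas f g A > 0 -> fmeas f g A < eps / (1 - eps) * gmeas f g A ->
       gmeas f g (fun w => A w /\ Rset T f g eps w) > 0) /\
    (forall eps, 1/2 < eps < 1 ->
       fmeas f g A > 0 -> gmeas f g A < (1 - eps) / eps * fmeas f g A ->
       fmeas f g (fun w => A w /\ Lset T f g eps w) > 0).

(* The finite derivative test: D_{t+1} depends on the first t entries. *)
Definition Dtest : test := fun t h =>
  match t with
  | O => 1/2   (* index 0 is not part of the test; irrelevant for limits *)
  | S k =>
      let h' := firstn k h in
      let a := fweight h' in
      let b := gweight h' in
      if Rlt_dec 0 a then a / (a + b)
      else if Rlt_dec 0 b then a / (a + b)
      else 1/2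
  end.

(* Write F and G for the premeasures f(.) and g(.) on cylinders (binary
   strings), so that D_{t+1} = F(w^t) / (F(w^t) + G(w^t)).  The measures of
   the statement are Caratheodory outer measures: infima of the total weight
   of countable covers by cylinders.  We work with "small covers": a family of
   strings covering a set all of whose finite subfamilies have weight at most
   M; the outer measure is < M only if there is such a cover, and <= M if
   there is one.  The proof then has three ingredients.
   1. Stopping: the first times after a string s at which a property holds
      form an antichain above s, whose total weight is at most that of s.
   2. Likelihood ratio: when D > th, G <= (1-th)/th * F; when D < a,
      F <= a/(1-a) * G.  Alternating both stopping rules k times bounds the
      G-weight of the upcrossings of [a,b] by a geometric factor r^k, r < 1,
      so upcrossings are G-null, hence so is the set where D does not
      converge (a [0,1]-valued sequence without grid upcrossings converges).
   3. Covering A by {lim D < eps}, the non-convergence set, and the first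
      times after an F-cover of A at which D > th gives
         G(A) <= G(A /\ lim D < eps) + (1-eps)/eps * F(A),
      which yields both halves of reasonableness (the second by symmetry). *)

From Stdlib Require Import Reals List Lia Lra ClassicalEpsilon Classical.
Import ListNotations.
Open Scope R_scope.

Fixpoint lsum {X : Type} (w : X -> R) (L : list X) : R :=
  match L with [] => 0 | x :: L' => w x + lsum w L' end.

Section ListSums.
Context {X : Type}.

Lemma lsum_filter (w : X -> R) (p : X -> bool) L :
  lsum w L = lsum w (filter p L) + lsum w (filter (fun x => negb (p x)) L).
Proof. induction L as [|x L IH]; simpl; [lra|]. destruct (p x); simpl; lra. Qed.

Lemma lsum_le (w1 w2 : X -> R) L :
  (forall x, In x L -> w1 x <= w2 x) -> lsum w1 L <= lsum w2 L.
Proof.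
  induction L as [|x L IH]; simpl; intros H; [lra|].
  pose proof (H x (or_introl eq_refl)). pose proof (IH (fun y Hy => H y (or_intror Hy))). lra.
Qed.

Lemma lsum_scale (w : X -> R) c L : lsum (fun x => c * w x) L = c * lsum w L.
Proof. induction L; simpl; [ring|]. rewrite IHL. ring. Qed.

Lemma lsum_const (c : R) (L : list X) : lsum (fun _ => c) L = INR (length L) * c.
Proof. induction L; simpl length; [simpl; ring|]. rewrite S_INR. simpl lsum. rewrite IHL. ring. Qed.

(* A duplicate-free list all of whose entries equal x has at most one entry. *)
Lemma lsum_le_single (w : X -> R) x L :
  NoDup L -> (forall y, In y L -> y = x) -> 0 <= w x -> lsum w L <= w x.
Proof.
  intros ND H Hx. destruct L as [|y [|z L]]; simpl; [lra| |].
  - rewrite (H y (or_introl eq_refl)). lra.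
  - exfalso. inversion ND as [|a b Hn ND']; subst. apply Hn. left.
    rewrite (H y (or_introl eq_refl)), (H z (or_intror (or_introl eq_refl))). reflexivity.
Qed.

Definition decide (P : Prop) : bool := if excluded_middle_informative P then true else false.

Lemma decide_spec P : decide P = true <-> P.
Proof. unfold decide; destruct excluded_middle_informative; split; intros; auto; discriminate. Qed.

Lemma lsum_union2 (w : X -> R) (C1 C2 : X -> Prop) M1 M2 L :
  NoDup L -> Forall (fun x => C1 x \/ C2 x) L ->
  (forall L', NoDup L' -> Forall C1 L' -> lsum w L' <= M1) ->
  (forall L', NoDup L' -> Forall C2 L' -> lsum w L' <= M2) ->
  lsum w L <= M1 + M2.
Proof.
  intros ND HF B1 B2. rewrite Forall_forall in HF.
  rewrite (lsum_filter w (fun x => decide (C1 x)) L).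
  assert (lsum w (filter (fun x => decide (C1 x)) L) <= M1).
  { apply B1; [apply NoDup_filter; auto|]. apply Forall_forall. intros x Hx.
    apply filter_In in Hx as [_ Hx]. apply decide_spec; auto. }
  assert (lsum w (filter (fun x => negb (decide (C1 x))) L) <= M2).
  { apply B2; [apply NoDup_filter; auto|]. apply Forall_forall. intros x Hx.
    apply filter_In in Hx as [Hx Hd]. destruct (HF x Hx) as [H1|]; auto.
    apply decide_spec in H1. rewrite H1 in Hd. discriminate. }
  lra.
Qed.

Lemma lsum_union_list {I : Type} (w : X -> R) (C : I -> X -> Prop) (M : I -> R) (J : list I) L :
  NoDup L -> Forall (fun x => exists i, In i J /\ C i x) L ->
  (forall i, In i J -> forall L', NoDup L' -> Forall (C i) L' -> lsum w L' <= M i) ->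
  lsum w L <= lsum M J.
Proof.
  revert L. induction J as [|i J IH]; intros L ND HF HB; simpl.
  - destruct L as [|x L]; simpl; [lra|]. inversion HF as [|? ? [i [[] _]]].
  - apply (lsum_union2 w (C i) (fun x => exists j, In j J /\ C j x)); auto.
    + eapply Forall_impl; [|exact HF]. intros x [j [[<-|Hj] Hc]]; [left; auto|right; eauto].
    + intros L' ND' HF'. apply HB; auto. left; auto.
    + intros L' ND' HF'. apply IH; auto. intros j Hj. apply HB. right; auto.
Qed.

Lemma choose_indices {I : Type} (Q : I -> Prop) (C : I -> X -> Prop) L :
  Forall (fun x => exists i, Q i /\ C i x) L ->
  exists J, Forall Q J /\ Forall (fun x => exists i, In i J /\ C i x) L.
Proof.
  induction L as [|x L IH]; intros HF.
  - exists []. split; constructor.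
  - inversion HF as [|? ? [i [Qi Ci]] HL]; subst. destruct (IH HL) as [J [HJ HLJ]].
    exists (i :: J). split; [constructor; auto|]. constructor.
    + exists i; split; [left|]; auto.
    + eapply Forall_impl; [|exact HLJ]. intros y [j [Hj Cj]]. exists j; split; [right|]; auto.
Qed.

Lemma lsum_union {I : Type} (decI : forall x y : I, {x = y} + {x <> y})
  (w : X -> R) (Q : I -> Prop) (C : I -> X -> Prop) (M : I -> R) L :
  NoDup L -> Forall (fun x => exists i, Q i /\ C i x) L ->
  (forall i, Q i -> forall L', NoDup L' -> Forall (C i) L' -> lsum w L' <= M i) ->
  exists J, NoDup J /\ Forall Q J /\ lsum w L <= lsum M J.
Proof.
  intros ND HF HB. destruct (choose_indices Q C L HF) as [J [HJ HL]].
  rewrite Forall_forall in HJ. exists (nodup decI J). split; [apply NoDup_nodup|]. split.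
  - apply Forall_forall. intros i Hi. apply nodup_In in Hi. auto.
  - apply (lsum_union_list w C M); auto.
    + eapply Forall_impl; [|exact HL]. intros x [i [Hi Ci]]. exists i. rewrite nodup_In. auto.
    + intros i Hi. apply HB, HJ. apply nodup_In in Hi; auto.
Qed.

Lemma list_bounded (f : X -> nat) (L : list X) : exists n, forall x, In x L -> (f x <= n)%nat.
Proof.
  induction L as [|x L [n Hn]]; [exists 0%nat; intros u []|].
  exists (Nat.max n (f x)). intros u [<-|Hu]; [lia|]. specialize (Hn u Hu). lia.
Qed.
End ListSums.

Lemma lsum_le_partial_sum (a : nat -> R) (J : list nat) N :
  (forall n, 0 <= a n) -> NoDup J -> (forall k, In k J -> (k <= N)%nat) ->
  lsum a J <= sum_f_R0 a N.
Proof.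
  intros Ha. revert J. induction N as [|N IH]; intros J ND HJ; simpl.
  - apply lsum_le_single; auto. intros y Hy. specialize (HJ y Hy). lia.
  - rewrite (lsum_filter a (fun k => Nat.eqb k (S N)) J).
    assert (lsum a (filter (fun k => Nat.eqb k (S N)) J) <= a (S N)).
    { apply lsum_le_single; auto; [apply NoDup_filter; auto|].
      intros y Hy. apply filter_In in Hy as [_ Hy]. apply Nat.eqb_eq; auto. }
    assert (lsum a (filter (fun k => negb (Nat.eqb k (S N))) J) <= sum_f_R0 a N).
    { apply IH; [apply NoDup_filter; auto|]. intros k Hk. apply filter_In in Hk as [Hk Hn].
      specialize (HJ k Hk). destruct (Nat.eqb_spec k (S N)); simpl in Hn; [discriminate|]. lia. }
    lra.
Qed.

Definition weight (w : list bool -> R) : Prop :=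
  (forall s, 0 <= w s) /\ w [] = 1 /\ (forall s, w s = w (s ++ [true]) + w (s ++ [false])).

Definition extends (s u : list bool) := exists r, u = s ++ r.

(* An antichain of extensions of s (no member is a proper prefix of another)
   has total weight at most w s; induction on the depth of the antichain. *)
Lemma antichain_sum w (Hw : weight w) : forall n s L,
  NoDup L -> Forall (extends s) L ->
  (forall u v r, In u L -> In v L -> v = u ++ r -> r = []) ->
  (forall u, In u L -> (length u <= length s + n)%nat) ->
  lsum w L <= w s.
Proof.
  destruct Hw as [Hpos [_ Hadd]].
  induction n as [|n IH]; intros s L ND HE HA HL; rewrite Forall_forall in HE.
  - apply lsum_le_single; auto. intros y Hy.
    destruct (HE y Hy) as [r ->]. specialize (HL _ Hy). rewrite length_app in HL.
    destruct r; [rewrite app_nil_r; auto|simpl in HL; lia].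
  - destruct (in_dec (list_eq_dec Bool.bool_dec) s L) as [Hs|Hs].
    + apply lsum_le_single; auto. intros y Hy. destruct (HE y Hy) as [r ->].
      rewrite (HA s (s ++ r) r Hs Hy eq_refl). apply app_nil_r.
    + (* split L according to the symbol following s *)
      set (p := fun u : list bool => nth (length s) u false).
      assert (Hsplit : forall u, In u L -> exists r, u = (s ++ [p u]) ++ r).
      { intros u Hu. destruct (HE u Hu) as [[|b r] Hr].
        - rewrite app_nil_r in Hr. subst. contradiction.
        - exists r. subst. rewrite <- app_assoc. unfold p.
          rewrite app_nth2 by lia. rewrite Nat.sub_diag. reflexivity. }
      assert (Hbranch : forall (b : bool) (q : list bool -> bool),
                 (forall u, In u L -> q u = true -> p u = b) ->
                 lsum w (filter q L) <= w (s ++ [b])).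
      { intros b q Hq. apply (IH (s ++ [b])).
        - apply NoDup_filter; auto.
        - apply Forall_forall. intros u Hu. apply filter_In in Hu as [Hu Hqu].
          destruct (Hsplit u Hu) as [r Hr]. rewrite (Hq u Hu Hqu) in Hr. exists r; auto.
        - intros u v r Hu Hv. apply filter_In in Hu as [Hu _]. apply filter_In in Hv as [Hv _]. eauto.
        - intros u Hu. apply filter_In in Hu as [Hu _]. destruct (Hsplit u Hu) as [r Hr].
          specialize (HL u Hu). rewrite Hr, !length_app in *. simpl in *. lia. }
      rewrite (lsum_filter w p L), (Hadd s).
      assert (lsum w (filter p L) <= w (s ++ [true])) by (apply Hbranch; auto).
      assert (lsum w (filter (fun x => negb (p x)) L) <= w (s ++ [false])).
      { apply Hbranch. intros u _ Hq. destruct (p u); auto. }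
      lra.
Qed.

Definition first_hit (s : list bool) (P : list bool -> Prop) (u : list bool) : Prop :=
  extends s u /\ P u /\ (forall r1 r2, u = s ++ r1 ++ r2 -> r2 <> [] -> ~ P (s ++ r1)).

(* First hits after s form an antichain above s. *)
Lemma first_hit_sum w (Hw : weight w) s P L :
  NoDup L -> Forall (first_hit s P) L -> lsum w L <= w s.
Proof.
  intros ND HF. rewrite Forall_forall in HF. destruct (list_bounded (@length bool) L) as [n Hn].
  apply (antichain_sum w Hw n s L ND).
  - apply Forall_forall. intros u Hu. apply HF; auto.
  - intros u v r Hu Hv Huv. destruct (HF u Hu) as [[r1 Hr1] [Pu _]].
    destruct (HF v Hv) as [_ [_ Hv3]]. destruct r as [|b r]; auto. exfalso.
    apply (Hv3 r1 (b :: r)); [subst; rewrite app_assoc; auto|discriminate|subst; auto].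
  - intros u Hu. specialize (Hn u Hu). lia.
Qed.

Lemma prefix_length w n : length (prefix w n) = n.
Proof. unfold prefix. rewrite length_map, length_seq. reflexivity. Qed.

Lemma prefix_add w n d : prefix w (n + d) = prefix w n ++ map w (seq n d).
Proof. unfold prefix. rewrite seq_app, map_app. reflexivity. Qed.

Lemma prefix_S w n : prefix w (S n) = prefix w n ++ [w n].
Proof. unfold prefix. rewrite seq_S, map_app. reflexivity. Qed.

Lemma prefix_of_prefix w m x y : prefix w m = x ++ y -> x = prefix w (length x).
Proof.
  intros H. assert (Hl : (length x <= m)%nat).
  { apply (f_equal (@length _)) in H. rewrite prefix_length, length_app in H. lia. }
  replace m with (length x + (m - length x))%nat in H by lia.
  rewrite prefix_add in H. apply (f_equal (firstn (length x))) in H.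
  rewrite !firstn_app, prefix_length, !Nat.sub_diag, !firstn_O, !app_nil_r, firstn_all in H.
  rewrite firstn_all2 in H by (rewrite prefix_length; lia). auto.
Qed.

Lemma cylinder_prefix w n : cylinder (prefix w n) w.
Proof. unfold cylinder. rewrite prefix_length. reflexivity. Qed.

Lemma first_hit_exists (w : seqOmega) (P : list bool -> Prop) n : forall m,
  (n <= m)%nat -> P (prefix w m) -> exists m', first_hit (prefix w n) P (prefix w m').
Proof.
  induction m as [m IH] using (well_founded_induction Nat.lt_wf_0). intros Hnm HP.
  destruct (classic (exists m'', (n <= m'' < m)%nat /\ P (prefix w m''))) as [[m'' [H1 H2]]|Hno].
  - exact (IH m'' (proj2 H1) (proj1 H1) H2).
  - exists m. split; [|split; auto].
    + exists (map w (seq n (m - n))). rewrite <- prefix_add. f_equal. lia.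
    + intros r1 r2 Heq Hr2 HP'. apply Hno. exists (length (prefix w n ++ r1)).
      rewrite app_assoc in Heq. pose proof (prefix_of_prefix _ _ _ _ Heq) as Hp.
      (* Omega is bool: unfolding it aligns the implicit list types *)
      split; [|unfold Omega in *; rewrite <- Hp; exact HP'].
      apply (f_equal (@length _)) in Heq. rewrite prefix_length, !length_app in Heq.
      rewrite length_app, prefix_length. destruct r2; [congruence|]. simpl in Heq.
      rewrite prefix_length in Heq. unfold Omega in *. lia.
Qed.

Definition small_cover (w : list bool -> R) (A : seqOmega -> Prop) (M : R) : Prop :=
  exists C : list bool -> Prop,
    (forall v, A v -> exists s, C s /\ cylinder s v) /\
    (forall L, NoDup L -> Forall C L -> lsum w L <= M).

Lemma small_cover_mono w A B M M' :
  small_cover w B M -> (forall v, A v -> B v) -> M <= M' -> small_cover w A M'.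
Proof.
  intros [C [H1 H2]] HAB HM. exists C. split; auto. intros L ND HF. specialize (H2 L ND HF). lra.
Qed.

Lemma small_cover_add w A B MA MB :
  small_cover w A MA -> small_cover w B MB -> small_cover w (fun v => A v \/ B v) (MA + MB).
Proof.
  intros [CA [HA1 HA2]] [CB [HB1 HB2]]. exists (fun s => CA s \/ CB s). split.
  - intros v [Av|Bv]; [destruct (HA1 v Av) as [s [Cs Hs]]|destruct (HB1 v Bv) as [s [Cs Hs]]]; eauto.
  - intros L ND HF. apply (lsum_union2 w CA CB); auto.
Qed.

Lemma small_cover_union {I : Type} (decI : forall x y : I, {x = y} + {x <> y}) w (Q : I -> Prop)
  (B : I -> seqOmega -> Prop) (M : I -> R) K :
  (forall i, Q i -> small_cover w (B i) (M i)) ->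
  (forall J, NoDup J -> Forall Q J -> lsum M J <= K) ->
  small_cover w (fun v => exists i, Q i /\ B i v) K.
Proof.
  intros HC HK.
  set (Cf := fun i => match excluded_middle_informative (Q i) with
                      | left H => proj1_sig (constructive_indefinite_description _ (HC i H))
                      | right _ => fun _ => False end).
  assert (Hspec : forall i, Q i -> (forall v, B i v -> exists s, Cf i s /\ cylinder s v) /\
                     (forall L, NoDup L -> Forall (Cf i) L -> lsum w L <= M i)).
  { intros i Qi. unfold Cf. destruct excluded_middle_informative as [H|H]; [|contradiction].
    destruct (constructive_indefinite_description _ (HC i H)) as [C HCi]. exact HCi. }
  exists (fun u => exists i, Q i /\ Cf i u). split.
  - intros v [i [Qi Bi]]. destruct ((proj1 (Hspec i Qi)) v Bi) as [s [Cs Hs]]. eauto.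
  - intros L ND HF. destruct (lsum_union decI w Q Cf M L ND HF) as [J [NDJ [QJ HJ]]].
    + intros i Qi. apply (proj2 (Hspec i Qi)).
    + specialize (HK J NDJ QJ). lra.
Qed.

(* An injective numbering of binary strings, used to turn a family of strings
   into a sequence. *)
Fixpoint code (u : list bool) : nat :=
  match u with [] => 0%nat | b :: u' => S (2 * code u' + (if b then 1 else 0)) end.

Lemma code_inj : forall u v, code u = code v -> u = v.
Proof.
  induction u as [|b u IH]; intros [|b' v] H; simpl in H; try lia; auto.
  assert (b = b' /\ code u = code v) as [-> E] by (destruct b, b'; split; auto; lia).
  rewrite (IH v E). reflexivity.
Qed.

Definition pick (C : list bool -> Prop) (k : nat) : option (list bool) :=
  match excluded_middle_informative (exists u, code u = k /\ C u) with
  | left H => Some (proj1_sig (constructive_indefinite_description _ H))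
  | right _ => None
  end.

Lemma pick_some C k u : pick C k = Some u -> code u = k /\ C u.
Proof.
  unfold pick. destruct excluded_middle_informative as [H|H]; [|discriminate].
  destruct (constructive_indefinite_description _ H) as [x Hx]. simpl. intros E. inversion E; subst; auto.
Qed.

Lemma pick_none C k : pick C k = None -> ~ exists u, code u = k /\ C u.
Proof. unfold pick. destruct excluded_middle_informative as [H|H]; [discriminate|auto]. Qed.

(* Always following the lighter child gives strings of weight <= 2^-k, used
   to pad sequences of cylinders at negligible cost. *)
Fixpoint light_path (w : list bool -> R) (k : nat) : list bool :=
  match k with
  | O => []
  | S k => let q := light_path w k in
           if Rle_dec (w (q ++ [true])) (w (q ++ [false])) then q ++ [true] else q ++ [false]
  end.

Lemma light_path_bound w (Hw : weight w) k : w (light_path w k) <= (1/2)^k.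
Proof.
  destruct Hw as [Hpos [H0 Hadd]]. induction k; simpl.
  - rewrite H0. lra.
  - specialize (Hadd (light_path w k)). destruct Rle_dec; lra.
Qed.

Lemma geom_sum m n : sum_f_R0 (fun k => (1/2)^(k+m)) n + 2 * (1/2)^(S n + m) = 2 * (1/2)^m.
Proof. induction n; simpl; [lra|]. rewrite <- IHn. simpl. lra. Qed.

Lemma partial_sums_growing (a : nat -> R) : (forall n, 0 <= a n) -> Un_growing (sum_f_R0 a).
Proof. intros H n. simpl. specialize (H (S n)). lra. Qed.

Lemma cv_const c : Un_cv (fun _ => c) c.
Proof. intros e He. exists 0%nat. intros. rewrite Rdist_eq. lra. Qed.

Definition padded_seq (w : list bool -> R) (C : list bool -> Prop) (m : nat) (k : nat) : list bool :=
  match pick C k with Some u => u | None => light_path w (k + m) end.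

Lemma padded_seq_partial_sum w (Hw : weight w) C m n :
  exists L, NoDup L /\ Forall C L /\ (forall u, In u L -> (code u <= n)%nat) /\
    sum_f_R0 (fun k => w (padded_seq w C m k)) n
      <= lsum w L + sum_f_R0 (fun k => (1/2)^(k+m)) n.
Proof.
  assert (Hpad : forall k, w (light_path w (k + m)) <= (1/2)^(k+m)) by (intros; apply light_path_bound; auto).
  assert (Hgeo : forall k, 0 <= (1/2)^(k+m)) by (intros; apply pow_le; lra).
  induction n as [|n [L [ND [HF [Hc Hs]]]]]; simpl.
  - unfold padded_seq. destruct (pick C 0) as [u|] eqn:E.
    + apply pick_some in E as [E1 E2]. exists [u].
      split; [repeat constructor; auto|]. split; [constructor; auto|].
      split; [intros v [<-|[]]; lia|]. simpl. specialize (Hgeo 0%nat). simpl in Hgeo. lra.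
    + exists []. split; [constructor|]. split; [constructor|]. split; [intros v []|].
      simpl. specialize (Hpad 0%nat). simpl in Hpad. lra.
  - unfold padded_seq at 2. destruct (pick C (S n)) as [u|] eqn:E.
    + apply pick_some in E as [E1 E2]. exists (u :: L). split.
      { constructor; auto. intros Hu. specialize (Hc u Hu). lia. }
      split; [constructor; auto|].
      split; [intros v [<-|Hv]; [lia|specialize (Hc v Hv); lia]|].
      simpl. specialize (Hgeo (S n)). simpl in Hgeo. lra.
    + exists L. split; [auto|]. split; [auto|].
      split; [intros v Hv; specialize (Hc v Hv); lia|]. specialize (Hpad (S n)).
      change ((1/2)^(S n + m)) with (1/2 * (1/2)^(n + m)) in Hpad. lra.
Qed.

Lemma small_cover_value w (Hw : weight w) A M : small_cover w A M -> forall m,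
  exists x, cover_value w A x /\ x <= M + 2 * (1/2)^m.
Proof.
  intros [C [Hcov HB]] m. set (t := padded_seq w C m).
  assert (Hbd : forall n, sum_f_R0 (fun k => w (t k)) n <= M + 2 * (1/2)^m).
  { intros n. destruct (padded_seq_partial_sum w Hw C m n) as [L [ND [HF [_ Hs]]]].
    specialize (HB L ND HF). pose proof (geom_sum m n).
    pose proof (pow_le (1/2) (S n + m) ltac:(lra)). unfold t. lra. }
  assert (Hg : Un_growing (sum_f_R0 (fun k => w (t k)))) by (apply partial_sums_growing; intros; apply Hw).
  destruct (growing_cv _ Hg) as [x Hx].
  { exists (M + 2 * (1/2)^m). intros y [n ->]. apply Hbd. }
  exists x. split.
  - exists t. split; [|exact Hx]. intros v Hv. destruct (Hcov v Hv) as [s [Cs Hs]].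
    exists (code s). unfold t, padded_seq. destruct (pick C (code s)) as [u|] eqn:E.
    + apply pick_some in E as [E1 E2]. apply code_inj in E1. subst; auto.
    + exfalso. apply (pick_none C (code s) E). eauto.
  - exact (@Rle_cv_lim _ (fun _ => M + 2 * (1/2)^m) _ _ Hbd Hx (cv_const _)).
Qed.

Lemma cover_value_nonneg w (Hw : weight w) A x : cover_value w A x -> 0 <= x.
Proof.
  intros [s [_ Hs]]. apply (@Rle_cv_lim (fun _ => 0) (sum_f_R0 (fun k => w (s k)))); [|apply cv_const|exact Hs].
  intros n. apply cond_pos_sum. intros; apply Hw.
Qed.

Lemma small_cover_top w (Hw : weight w) A : small_cover w A 1.
Proof.
  exists (fun u => u = []). split.
  - intros v _. exists []. split; reflexivity.
  - intros L ND HF. destruct Hw as [Hpos [H0 _]]. rewrite <- H0. apply lsum_le_single; auto.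
    rewrite Forall_forall in HF. auto.
Qed.

Lemma ext_measure_glb w (Hw : weight w) A : is_glb (cover_value w A) (ext_measure w A).
Proof.
  unfold ext_measure. apply epsilon_spec.
  destruct (small_cover_value w Hw A 1 (small_cover_top w Hw A) 0) as [x0 [Hx0 _]].
  destruct (completeness (fun y => cover_value w A (- y))) as [l [Hl1 Hl2]].
  { exists 0. intros y Hy. pose proof (cover_value_nonneg w Hw A _ Hy). lra. }
  { exists (- x0). rewrite Ropp_involutive. auto. }
  exists (- l). split.
  - intros x Hx. assert (- x <= l) by (apply Hl1; rewrite Ropp_involutive; auto). lra.
  - intros y Hy. assert (l <= - y) by (apply Hl2; intros z Hz; specialize (Hy _ Hz); lra). lra.
Qed.

Lemma ext_measure_nonneg w (Hw : weight w) A : 0 <= ext_measure w A.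
Proof. apply (ext_measure_glb w Hw A). intros x Hx. apply (cover_value_nonneg w Hw A x Hx). Qed.

Lemma ext_measure_mono w (Hw : weight w) A B :
  (forall v, A v -> B v) -> ext_measure w A <= ext_measure w B.
Proof.
  intros HAB. apply (ext_measure_glb w Hw B). intros x [s [Hc Hs]].
  apply (ext_measure_glb w Hw A). exists s. split; auto.
Qed.

Lemma small_cover_le w (Hw : weight w) A M : small_cover w A M -> ext_measure w A <= M.
Proof.
  intros HC. apply le_epsilon. intros e He.
  destruct (pow_lt_1_zero (1/2) ltac:(rewrite Rabs_right; lra) (e / 2) ltac:(lra)) as [N HN].
  specialize (HN N (le_n N)). rewrite Rabs_right in HN by (apply Rle_ge, pow_le; lra).
  destruct (small_cover_value w Hw A M HC N) as [x [Hx Hxm]].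
  pose proof (proj1 (ext_measure_glb w Hw A) x Hx). lra.
Qed.

Lemma lt_small_cover w (Hw : weight w) A M : ext_measure w A < M -> small_cover w A M.
Proof.
  intros Hlt. destruct (classic (exists x, cover_value w A x /\ x < M)) as [[x [[s [Hc Hs]] Hx]]|Hno].
  - exists (fun u => exists k, s k = u). split.
    + intros v Hv. destruct (Hc v Hv) as [k Hk]. eauto.
    + intros L ND HF. destruct Hw as [Hpos _].
      destruct (lsum_union Nat.eq_dec w (fun _ => True) (fun k u => s k = u) (fun k => w (s k)) L ND)
        as [J [NDJ [_ HJ]]].
      * eapply Forall_impl; [|exact HF]. intros u [k Hk]. eauto.
      * intros k _ L' ND' HF'. apply lsum_le_single; auto.
        rewrite Forall_forall in HF'. intros y Hy. symmetry. auto.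
      * destruct (list_bounded (fun k : nat => k) J) as [N HN].
        pose proof (lsum_le_partial_sum (fun k => w (s k)) J N (fun n => Hpos _) NDJ HN).
        pose proof (growing_ineq _ _ (partial_sums_growing (fun k => w (s k)) (fun n => Hpos _)) Hs N).
        lra.
  - exfalso. assert (M <= ext_measure w A); [|lra].
    apply (ext_measure_glb w Hw A). intros x Hx. apply Rnot_lt_le. intros Hxm. eauto.
Qed.

Definition infinitely_often (P : nat -> Prop) : Prop := forall N, exists n, (n >= N)%nat /\ P n.
Definition eventually (P : nat -> Prop) : Prop := exists N, forall n, (n >= N)%nat -> P n.

Definition upcrossing (u : nat -> R) (a b : R) : Prop :=
  infinitely_often (fun n => u n < a) /\ infinitely_often (fun n => u n > b).

Definition grid_upcrossing (u : nat -> R) (m : nat) : Prop :=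
  exists j, (j <= m)%nat /\ upcrossing u (INR j / INR (S m)) (INR (S j) / INR (S m)).

Definition Dval (F G : list bool -> R) (s : list bool) : R :=
  let a := F s in let b := G s in
  if Rlt_dec 0 a then a / (a + b) else if Rlt_dec 0 b then a / (a + b) else 1/2.

Section Derivative.
Variables F G : list bool -> R.
Hypothesis HF : weight F.
Hypothesis HG : weight G.

Definition Dn (w : seqOmega) (n : nat) : R := Dval F G (prefix w n).

Lemma Dval_range s : 0 <= Dval F G s <= 1.
Proof.
  unfold Dval. pose proof (proj1 HF s). pose proof (proj1 HG s).
  destruct Rlt_dec as [K1|K1].
  - split; [apply Rle_mult_inv_pos; lra|]. apply Rmult_le_reg_r with (F s + G s); [lra|].
    unfold Rdiv. rewrite Rmult_assoc, Rinv_l by lra. lra.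
  - destruct Rlt_dec as [K2|K2]; [|lra].
    replace (F s) with 0 by lra. unfold Rdiv. rewrite Rmult_0_l. lra.
Qed.

Lemma Dval_lt_bound s a : 0 <= a < 1 -> Dval F G s < a -> F s <= a / (1 - a) * G s.
Proof.
  intros Ha HD. unfold Dval in HD. pose proof (proj1 HF s). pose proof (proj1 HG s).
  assert (0 <= a / (1 - a)) by (apply Rle_mult_inv_pos; lra).
  destruct (Rlt_dec 0 (F s)) as [K1|K1].
  - assert (E : F s = F s / (F s + G s) * (F s + G s)) by (field; lra).
    assert (F s < a * (F s + G s)) by (rewrite E at 1; apply Rmult_lt_compat_r; lra).
    assert (E2 : a / (1 - a) * G s = a * G s / (1 - a)) by (field; lra). rewrite E2.
    apply Rmult_le_reg_r with (1 - a); [lra|]. unfold Rdiv. rewrite Rmult_assoc, Rinv_l by lra. lra.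
  - replace (F s) with 0 by lra. nra.
Qed.

Lemma Dval_gt_bound s b : 0 < b <= 1 -> Dval F G s > b -> G s <= (1 - b) / b * F s.
Proof.
  intros Hb HD. unfold Dval in HD. pose proof (proj1 HF s). pose proof (proj1 HG s).
  assert (0 <= (1 - b) / b) by (apply Rle_mult_inv_pos; lra).
  destruct (Rlt_dec 0 (F s)) as [K1|K1].
  - assert (E : F s = F s / (F s + G s) * (F s + G s)) by (field; lra).
    assert (F s > b * (F s + G s)) by (rewrite E at 1; apply Rmult_gt_compat_r; lra).
    assert (E2 : (1 - b) / b * F s = (1 - b) * F s / b) by (field; lra). rewrite E2.
    apply Rmult_le_reg_r with b; [lra|]. unfold Rdiv. rewrite Rmult_assoc, Rinv_l by lra. lra.
  - destruct (Rlt_dec 0 (G s)) as [K2|K2].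
    + replace (F s) with 0 in HD by lra. unfold Rdiv in HD. rewrite Rmult_0_l in HD. lra.
    + replace (G s) with 0 by lra. nra.
Qed.

(* Stopping at the first time D > b after each string of a small F-cover of A
   yields a G-cover of the points of A where D > b infinitely often, at the
   cost of the factor (1-b)/b. *)
Lemma small_cover_stopped A M b : 0 < b <= 1 -> small_cover F A M ->
  small_cover G (fun w => A w /\ infinitely_often (fun n => Dn w n > b)) ((1 - b) / b * M).
Proof.
  intros Hb [C [Hcov HM]]. set (P := fun s => Dval F G s > b).
  assert (Hk : 0 <= (1 - b) / b) by (apply Rle_mult_inv_pos; lra).
  exists (fun u => exists s, C s /\ first_hit s P u). split.
  - intros w [Aw Hio]. destruct (Hcov w Aw) as [s [Cs Hs]].
    assert (Hs' : prefix w (length s) = s) by exact Hs.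
    destruct (Hio (length s)) as [m [Hm Pm]].
    destruct (first_hit_exists w P (length s) m Hm Pm) as [m' Hst]. rewrite Hs' in Hst.
    exists (prefix w m'). split; [eauto|apply cylinder_prefix].
  - intros L ND HFL.
    destruct (lsum_union (list_eq_dec Bool.bool_dec) G C (fun s u => first_hit s P u)
                (fun s => (1 - b) / b * F s) L ND HFL) as [J [NDJ [CJ HJ]]].
    + intros s _ L' ND' HF'. rewrite Forall_forall in HF'.
      apply Rle_trans with (lsum (fun x => (1 - b) / b * F x) L').
      * apply lsum_le. intros x Hx. destruct (HF' x Hx) as [_ [Px _]]. apply Dval_gt_bound; auto.
      * rewrite lsum_scale. apply Rmult_le_compat_l; auto.
        apply (first_hit_sum F HF s P L' ND'). apply Forall_forall; auto.
    + rewrite lsum_scale in HJ. specialize (HM J NDJ CJ).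
      assert ((1 - b) / b * lsum F J <= (1 - b) / b * M) by (apply Rmult_le_compat_l; auto). lra.
Qed.

Fixpoint crossing_nodes (a b : R) (k : nat) : list bool -> Prop :=
  match k with
  | O => fun u => u = []
  | S k => fun v => exists u, (exists s, crossing_nodes a b k s /\ first_hit s (fun x => Dval F G x < a) u) /\
                         first_hit u (fun x => Dval F G x > b) v
  end.

Lemma upcrossing_reaches_nodes a b k w :
  upcrossing (Dn w) a b -> exists n, crossing_nodes a b k (prefix w n).
Proof.
  intros [Ha Hb]. induction k as [|k [n Hn]]; [exists 0%nat; reflexivity|].
  destruct (Ha n) as [m1 [Hm1 P1]].
  destruct (first_hit_exists w (fun x => Dval F G x < a) n m1 Hm1 P1) as [m1' S1].
  destruct (Hb m1') as [m2 [Hm2 P2]].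
  destruct (first_hit_exists w (fun x => Dval F G x > b) m1' m2 Hm2 P2) as [m2' S2].
  exists m2'. exists (prefix w m1'). split; eauto.
Qed.

(* Each round multiplies the G-weight by at most (1-b)/b * a/(1-a). *)
Lemma crossing_nodes_weight a b (Hab : 0 <= a < b) (Hb1 : b <= 1) : forall k L,
  NoDup L -> Forall (crossing_nodes a b k) L -> lsum G L <= ((1 - b) / b * (a / (1 - a))) ^ k.
Proof.
  assert (Hk1 : 0 <= (1 - b) / b) by (apply Rle_mult_inv_pos; lra).
  assert (Hk2 : 0 <= a / (1 - a)) by (apply Rle_mult_inv_pos; lra).
  set (r := (1 - b) / b * (a / (1 - a))). assert (Hr : 0 <= r) by (apply Rmult_le_pos; auto).
  induction k as [|k IH]; intros L ND HFL; simpl in HFL |- *.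
  - destruct HG as [Hp [H0 _]]. rewrite <- H0. apply lsum_le_single; auto.
    rewrite Forall_forall in HFL. auto.
  - (* the last stop, at D > b: G <= (1-b)/b F, summed over first hits after u *)
    destruct (lsum_union (list_eq_dec Bool.bool_dec) G
                (fun u => exists s, crossing_nodes a b k s /\ first_hit s (fun x => Dval F G x < a) u)
                (fun u => first_hit u (fun x => Dval F G x > b))
                (fun u => (1 - b) / b * F u) L ND HFL) as [J [NDJ [QJ HJ]]].
    { intros u _ L' ND' HF'.
      apply Rle_trans with (lsum (fun x => (1 - b) / b * F x) L'); [|rewrite lsum_scale].
      - apply lsum_le. intros x Hx. rewrite Forall_forall in HF'.
        destruct (HF' x Hx) as [_ [Px _]]. apply Dval_gt_bound; auto. lra.
      - apply Rmult_le_compat_l; auto. apply (first_hit_sum F HF u _ L' ND' HF'). }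
    (* the stop before, at D < a: F <= a/(1-a) G *)
    assert (HJF : lsum (fun u => (1 - b) / b * F u) J <= r * lsum G J).
    { rewrite lsum_scale. unfold r. rewrite Rmult_assoc. apply Rmult_le_compat_l; auto.
      rewrite <- lsum_scale. apply lsum_le. intros x Hx. rewrite Forall_forall in QJ.
      destruct (QJ x Hx) as [s [_ [_ [Px _]]]]. apply Dval_lt_bound; auto. lra. }
    (* the G-weight of those first hits is at most that of the nodes of round k *)
    destruct (lsum_union (list_eq_dec Bool.bool_dec) G (crossing_nodes a b k)
                (fun s u => first_hit s (fun x => Dval F G x < a) u) G J NDJ QJ)
      as [J2 [NDJ2 [QJ2 HJ2]]].
    { intros s _ L' ND' HF'. apply (first_hit_sum G HG s _ L' ND' HF'). }
    specialize (IH J2 NDJ2 QJ2). fold r in IH.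
    assert (r * lsum G J <= r * r ^ k) by (apply Rmult_le_compat_l; lra).
    lra.
Qed.

Lemma upcrossing_null a b (Hab : 0 <= a < b) (Hb1 : b <= 1) d : d > 0 ->
  small_cover G (fun w => upcrossing (Dn w) a b) d.
Proof.
  intros Hd. set (r := (1 - b) / b * (a / (1 - a))).
  assert (Hr0 : 0 <= r) by (apply Rmult_le_pos; apply Rle_mult_inv_pos; lra).
  assert (Hr1 : r < 1).
  { unfold r. assert (0 < b * (1 - a)) by (apply Rmult_lt_0_compat; lra).
    assert (E : (1 - b) / b * (a / (1 - a)) = (a - a * b) / (b - a * b)) by (field; repeat split; lra).
    rewrite E. apply Rmult_lt_reg_r with (b - a * b); [lra|]. unfold Rdiv.
    rewrite Rmult_assoc, Rinv_l by lra. lra. }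
  destruct (pow_lt_1_zero r ltac:(rewrite Rabs_right; lra) d Hd) as [K HK].
  specialize (HK K (le_n K)). rewrite Rabs_right in HK by (apply Rle_ge, pow_le; auto).
  exists (crossing_nodes a b K). split.
  - intros w Hw. destruct (upcrossing_reaches_nodes a b K w Hw) as [n Hn].
    exists (prefix w n). split; auto. apply cylinder_prefix.
  - intros L ND HFL. pose proof (crossing_nodes_weight a b Hab Hb1 K L ND HFL). fold r in H. lra.
Qed.
End Derivative.

Lemma not_infinitely_often P : ~ infinitely_often P -> eventually (fun n => ~ P n).
Proof.
  intros H. apply not_all_ex_not in H as [N HN]. exists N. intros n Hn HP. apply HN. eauto.
Qed.

Lemma eventually_and P Q : eventually P -> eventually Q -> eventually (fun n => P n /\ Q n).
Proof. intros [N1 H1] [N2 H2]. exists (Nat.max N1 N2). intros n Hn. split; [apply H1|apply H2]; lia. Qed.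

(* A [0,1]-valued sequence crossing none of the intervals [j/q, (j+1)/q],
   q = m+1, eventually stays in some interval [i/q, (i+2)/q]: scanning the
   grid upwards, the sequence is eventually >= j/q until the first j at which
   it is eventually <= (j+1)/q. *)
Lemma grid_trap (u : nat -> R) m : (forall n, 0 <= u n <= 1) -> ~ grid_upcrossing u m ->
  exists i, eventually (fun n => INR i / INR (S m) <= u n <= INR (i + 2) / INR (S m)).
Proof.
  intros Hrange Hno. set (q := INR (S m)). assert (Hq : 0 < q) by (apply lt_0_INR; lia).
  assert (Hscan : forall j, (j <= m)%nat -> eventually (fun n => INR j / q <= u n) \/
            exists i, eventually (fun n => INR i / q <= u n <= INR (i + 2) / q)).
  { induction j as [|j IH]; intros Hj.
    - left. exists 0%nat. intros n _. rewrite INR_0. unfold Rdiv. rewrite Rmult_0_l. apply Hrange.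
    - destruct (IH ltac:(lia)) as [Hev|Hw]; [|right; auto].
      assert (Hj' : ~ upcrossing u (INR (S j) / q) (INR (S (S j)) / q)) by (intros HU; apply Hno; exists (S j); split; auto).
      destruct (not_and_or _ _ Hj') as [H1|H2].
      + left. destruct (not_infinitely_often _ H1) as [N0 HN0]. exists N0. intros n Hn.
        apply Rnot_lt_le, HN0, Hn.
      + right. exists j. destruct (eventually_and _ _ Hev (not_infinitely_often _ H2)) as [N0 HN0].
        exists N0. intros n Hn. destruct (HN0 n Hn) as [Ha Hb].
        replace (j + 2)%nat with (S (S j)) by lia. fold q in Hb. lra. }
  destruct (Hscan m (le_n m)) as [[N0 HN0]|Hw]; auto.
  exists m. exists N0. intros n Hn. split; auto. apply Rle_trans with 1; [apply Hrange|].
  apply Rmult_le_reg_r with q; auto. unfold Rdiv. rewrite Rmult_assoc, Rinv_l by lra.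
  rewrite Rmult_1_l, Rmult_1_r. apply le_INR. lia.
Qed.

Lemma converges_of_no_grid_upcrossing (u : nat -> R) : (forall n, 0 <= u n <= 1) ->
  (forall m, ~ grid_upcrossing u m) -> exists l, Un_cv u l.
Proof.
  intros Hrange Hno. destruct (R_complete u) as [l Hl]; [|exists l; auto].
  intros e He. destruct (archimed_cor1 (e / 2)) as [N [HN1 HN2]]; [lra|].
  set (m := pred N). assert (HmN : S m = N) by (unfold m; lia).
  destruct (grid_trap u m Hrange (Hno m)) as [i [N0 HN0]].
  set (q := INR (S m)) in HN0. assert (Hq : 0 < q) by (apply lt_0_INR; lia).
  assert (E : INR (i + 2) / q = INR i / q + 2 / q) by (rewrite plus_INR; simpl; field; lra).
  assert (2 / q < e) by (unfold q; rewrite HmN; unfold Rdiv; lra).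
  exists N0. intros n n' Hn Hn'. pose proof (HN0 n Hn). pose proof (HN0 n' Hn').
  unfold Rdist. apply Rabs_def1; lra.
Qed.

Lemma lsum_halving_levels d J : 0 <= d -> NoDup J -> lsum (fun m => d * (1/2)^(S m)) J <= d.
Proof.
  intros Hd ND. destruct (list_bounded (fun k : nat => k) J) as [N HN].
  eapply Rle_trans; [apply (lsum_le_partial_sum _ J N); auto|].
  { intros n. apply Rmult_le_pos; [lra|apply pow_le; lra]. }
  assert (E : sum_f_R0 (fun m => d * (1/2)^(S m)) N = sum_f_R0 (fun k => (1/2)^(k+1)) N * d).
  { rewrite Rmult_comm, scal_sum. apply sum_eq. intros i _. rewrite Nat.add_1_r. ring. }
  rewrite E. apply Rle_trans with (1 * d); [|lra]. apply Rmult_le_compat_r; [lra|].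
  pose proof (geom_sum 1 N). assert (0 <= (1/2)^(S N + 1)) by (apply pow_le; lra).
  simpl (2 * (1/2)^1) in *. lra.
Qed.

Section Convergence.
Variables F G : list bool -> R.
Hypothesis HF : weight F.
Hypothesis HG : weight G.

Lemma grid_upcrossing_null m dm : dm > 0 ->
  small_cover G (fun w => grid_upcrossing (Dn F G w) m) dm.
Proof.
  intros Hdm. assert (Hq : 0 < INR (S m)) by (apply lt_0_INR; lia).
  apply (small_cover_union Nat.eq_dec G (fun j => (j <= m)%nat) _ (fun _ => dm / INR (S m))).
  - intros j Hj. apply upcrossing_null; auto.
    + split; [apply Rle_mult_inv_pos; [apply pos_INR|lra]|].
      unfold Rdiv. apply Rmult_lt_compat_r; [apply Rinv_0_lt_compat; lra|apply lt_INR; lia].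
    + apply Rmult_le_reg_r with (INR (S m)); [lra|].
      unfold Rdiv. rewrite Rmult_assoc, Rinv_l, Rmult_1_r, Rmult_1_l by lra.
      apply le_INR; lia.
    + apply Rdiv_lt_0_compat; lra.
  - intros J ND HJ. rewrite lsum_const.
    assert (Hl : (length J <= S m)%nat).
    { rewrite <- (length_seq (S m) 0). apply NoDup_incl_length; auto. intros j Hj.
      rewrite Forall_forall in HJ. apply in_seq. specialize (HJ j Hj). lia. }
    apply le_INR in Hl.
    apply Rle_trans with (INR (S m) * (dm / INR (S m))).
    + apply Rmult_le_compat_r; auto. apply Rle_mult_inv_pos; lra.
    + right. field. lra.
Qed.

(* The set where D does not converge is G-null: it is contained in the
   union over m of the level-m grid upcrossing sets, covered with d 2^-(m+1). *)
Lemma nonconvergence_null d : d > 0 ->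
  small_cover G (fun w => ~ exists l, Un_cv (Dn F G w) l) d.
Proof.
  intros Hd.
  apply (small_cover_mono G _ (fun w => exists m, True /\ grid_upcrossing (Dn F G w) m) d);
    [|intros w Hw|apply Rle_refl].
  - apply (small_cover_union Nat.eq_dec G (fun _ => True) _ (fun m => d * (1/2)^(S m))).
    + intros m _. apply grid_upcrossing_null. apply Rmult_lt_0_compat; [lra|apply pow_lt; lra].
    + intros J ND _. apply lsum_halving_levels; auto. lra.
  - apply NNPP. intros Hc. apply Hw, converges_of_no_grid_upcrossing.
    + intros n. apply Dval_range; auto.
    + intros m HU. apply Hc. eauto.
Qed.
End Convergence.

Lemma le_of_perturbed x y k z : 0 <= k -> 0 <= z ->
  (forall d, 0 < d -> x <= y + 2 * d + (k + d) * (z + d)) -> x <= y + k * z.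
Proof.
  intros Hk Hz H. apply le_epsilon. intros e He.
  set (d := Rmin 1 (e / (k + z + 3))).
  assert (Hd0 : 0 < d) by (apply Rmin_glb_lt; [lra|apply Rdiv_lt_0_compat; lra]).
  assert (Hd1 : d <= 1) by apply Rmin_l.
  assert (Hde : d * (k + z + 3) <= e).
  { apply Rle_trans with (e / (k + z + 3) * (k + z + 3)).
    - apply Rmult_le_compat_r; [lra|apply Rmin_r].
    - right. field. lra. }
  specialize (H d Hd0). assert (d * d <= d * 1) by (apply Rmult_le_compat_l; lra). nra.
Qed.

Definition low_limit (F G : list bool -> R) (A : seqOmega -> Prop) (eps : R) (w : seqOmega) : Prop :=
  A w /\ exists l, Un_cv (Dn F G w) l /\ l < eps.

(* A is covered by the low-limit points, the non-convergence set, and the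
   points where D > th infinitely often for a threshold th < eps chosen so
   that (1-th)/th = (1-eps)/eps + d. *)
Lemma outer_bound F G (HF : weight F) (HG : weight G) eps A : 0 < eps < 1 ->
  ext_measure G A <= ext_measure G (low_limit F G A eps) + (1 - eps) / eps * ext_measure F A.
Proof.
  intros Heps. set (k := (1 - eps) / eps). assert (Hk : 0 < k) by (apply Rdiv_lt_0_compat; lra).
  apply le_of_perturbed; [lra|apply ext_measure_nonneg; auto|]. intros d Hd.
  set (th := 1 / (1 + (k + d))).
  assert (Hth : 0 < th <= 1).
  { unfold th. split; [apply Rdiv_lt_0_compat; lra|].
    apply Rmult_le_reg_r with (1 + (k + d)); [lra|]. unfold Rdiv.
    rewrite Rmult_assoc, Rinv_l by lra. lra. }
  assert (Hthe : th < eps).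
  { unfold th. apply Rmult_lt_reg_r with (1 + (k + d)); [lra|]. unfold Rdiv.
    rewrite Rmult_assoc, Rinv_l by lra. unfold k.
    replace (eps * (1 + ((1 - eps) / eps + d))) with (1 + eps * d) by (field; lra). nra. }
  assert (Hkth : (1 - th) / th = k + d) by (unfold th; field; lra).
  set (Stopped := fun w => A w /\ infinitely_often (fun n => Dn F G w n > th)).
  set (Nonconv := fun w => ~ exists l, Un_cv (Dn F G w) l).
  assert (Hcov : small_cover G (fun w => low_limit F G A eps w \/ (Nonconv w \/ Stopped w))
      ((ext_measure G (low_limit F G A eps) + d) + (d + (k + d) * (ext_measure F A + d)))).
  { apply small_cover_add; [apply lt_small_cover; auto; lra|].
    apply small_cover_add; [apply nonconvergence_null; auto|].
    rewrite <- Hkth. apply small_cover_stopped; auto. apply lt_small_cover; auto. lra. }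
  assert (Hincl : forall w, A w -> low_limit F G A eps w \/ (Nonconv w \/ Stopped w)).
  { intros w Aw. destruct (classic (exists l, Un_cv (Dn F G w) l)) as [[l Hl]|Hn]; [|right; left; auto].
    destruct (Rlt_le_dec l eps) as [Hlt|Hge]; [left; split; eauto|].
    (* the limit l >= eps > th: D eventually exceeds th *)
    right. right. split; auto. intros N. destruct (Hl (l - th) ltac:(lra)) as [N0 HN0].
    exists (Nat.max N N0). split; [lia|]. specialize (HN0 (Nat.max N N0) ltac:(lia)).
    unfold Rdist in HN0. apply Rabs_def2 in HN0. lra. }
  pose proof (small_cover_le G HG A _ (small_cover_mono G A _ _ _ Hcov Hincl (Rle_refl _))). lra.
Qed.

Lemma low_limit_positive F G (HF : weight F) (HG : weight G) eps A : 0 < eps < 1 ->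
  ext_measure F A < eps / (1 - eps) * ext_measure G A ->
  ext_measure G (low_limit F G A eps) > 0.
Proof.
  intros Heps HFA. pose proof (outer_bound F G HF HG eps A Heps) as Hb.
  assert (Hk : 0 < (1 - eps) / eps) by (apply Rdiv_lt_0_compat; lra).
  assert ((1 - eps) / eps * ext_measure F A < ext_measure G A).
  { apply Rmult_lt_compat_l with (r := (1 - eps) / eps) in HFA; auto.
    replace ((1 - eps) / eps * (eps / (1 - eps) * ext_measure G A)) with (ext_measure G A) in HFA
      by (field; lra). exact HFA. }
  lra.
Qed.

Lemma Dval_swap F G s : 0 <= F s -> 0 <= G s -> Dval G F s = 1 - Dval F G s.
Proof.
  intros H1 H2. unfold Dval.
  destruct (Rlt_dec 0 (F s)); destruct (Rlt_dec 0 (G s)); try (field; lra).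
Qed.

Lemma cv_one_minus (u : nat -> R) l : Un_cv u l -> Un_cv (fun n => 1 - u n) (1 - l).
Proof.
  intros H e He. destruct (H e He) as [N HN]. exists N. intros n Hn. specialize (HN n Hn).
  unfold Rdist in *. replace (1 - u n - (1 - l)) with (- (u n - l)) by ring. rewrite Rabs_Ropp. auto.
Qed.

(* The high-limit version, by exchanging F and G. *)
Lemma high_limit_positive F G (HF : weight F) (HG : weight G) eps A : 0 < eps < 1 ->
  ext_measure G A < (1 - eps) / eps * ext_measure F A ->
  ext_measure F (fun w => A w /\ exists l, Un_cv (Dn F G w) l /\ l > eps) > 0.
Proof.
  intros Heps HGA.
  assert (Hpos : ext_measure F (low_limit G F A (1 - eps)) > 0).
  { apply low_limit_positive; auto; [lra|].
    replace (1 - (1 - eps)) with eps by ring. exact HGA. }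
  eapply Rlt_le_trans; [exact Hpos|]. apply ext_measure_mono; auto.
  intros w [Aw [l [Hl Hlt]]]. split; auto. exists (1 - l). split; [|lra].
  apply cv_one_minus in Hl. intros e He. destruct (Hl e He) as [N HN]. exists N. intros n Hn.
  specialize (HN n Hn). unfold Dn in HN. rewrite Dval_swap in HN by (apply HF || apply HG).
  unfold Dn. replace (1 - (1 - Dval F G (prefix w n))) with (Dval F G (prefix w n)) in HN by ring.
  exact HN.
Qed.

Lemma hist_app1 f g s b :
  hist f g (s ++ [b]) = hist f g s ++ [(b, f (hist f g s), g (hist f g s))].
Proof. unfold hist. rewrite fold_left_app. reflexivity. Qed.

Lemma length_hist f g s : length (hist f g s) = length s.
Proof.
  induction s as [|b s IH] using rev_ind; [reflexivity|].
  rewrite hist_app1, !length_app, IH. reflexivity.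
Qed.

Lemma fweight_app1 h e : fweight (h ++ [e]) = fweight h * pr (snd (fst e)) (fst (fst e)).
Proof. induction h; unfold fweight in *; simpl; [ring|]. rewrite IHh. ring. Qed.

Lemma gweight_app1 h e : gweight (h ++ [e]) = gweight h * pr (snd e) (fst (fst e)).
Proof. induction h; unfold gweight in *; simpl; [ring|]. rewrite IHh. ring. Qed.

Lemma pr_nonneg p b : 0 <= pr p b.
Proof. destruct p as [x Hx]. destruct b; simpl; lra. Qed.

Lemma fcyl_weight f g : weight (fcyl f g).
Proof.
  split; [|split; [reflexivity|]].
  - intros s. unfold fcyl, fweight. induction (hist f g s); simpl; [lra|].
    apply Rmult_le_pos; auto. apply pr_nonneg.
  - intros s. unfold fcyl. rewrite !hist_app1, !fweight_app1. simpl. ring.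
Qed.

Lemma gcyl_weight f g : weight (gcyl f g).
Proof.
  split; [|split; [reflexivity|]].
  - intros s. unfold gcyl, gweight. induction (hist f g s); simpl; [lra|].
    apply Rmult_le_pos; auto. apply pr_nonneg.
  - intros s. unfold gcyl. rewrite !hist_app1, !gweight_app1. simpl. ring.
Qed.

Lemma firstn_hist f g w n : firstn n (hist f g (prefix w (S n))) = hist f g (prefix w n).
Proof.
  rewrite prefix_S, hist_app1, firstn_app, length_hist, prefix_length, Nat.sub_diag.
  rewrite firstn_O, app_nil_r. apply firstn_all2. rewrite length_hist, prefix_length. lia.
Qed.

Lemma Dtest_along f g w n : Tt Dtest f g w (S n) = Dn (fcyl f g) (gcyl f g) w n.
Proof. unfold Tt, Dtest, Dn, Dval, fcyl, gcyl. rewrite firstn_hist. reflexivity. Qed.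

Lemma Dtest_limit f g w l : Un_cv (Dn (fcyl f g) (gcyl f g) w) l -> Tlim Dtest f g w l.
Proof.
  intros H e He. destruct (H e He) as [N HN]. exists (S N). intros [|n] Hn; [lia|].
  rewrite Dtest_along. apply HN. lia.
Qed.

Theorem proposition3 : reasonable Dtest.
Proof.
  intros f g A _. pose proof (fcyl_weight f g) as HF. pose proof (gcyl_weight f g) as HG. split.
  - intros eps Heps _ HfA. eapply Rlt_le_trans.
    + apply (low_limit_positive _ _ HF HG eps A); [lra|exact HfA].
    + apply ext_measure_mono; auto. intros w [Aw [l [Hl Hlt]]].
      split; [exact Aw|]. exists l. split; [apply Dtest_limit|]; auto.
  - intros eps Heps _ HgA. eapply Rlt_le_trans.
    + apply (high_limit_positive _ _ HF HG eps A); [lra|exact HgA].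
    + apply ext_measure_mono; auto. intros w [Aw [l [Hl Hgt]]].
      split; [exact Aw|]. exists l. split; [apply Dtest_limit|]; auto.
Qed.
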